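(* For every set of formulas $\Gamma$ and formula $\phi$: if $\Gamma\models_{\mathbf{VC}}\phi$ then $\Gamma\vdash_{\mathbf{VC}}\phi$.
   Context: Formulas: built from propositional variables and the constant $\bot$ using $\lnot$, the binary connectives $\supset,\land,\lor$, and two binary conditional operators $[\phi]\psi$ and $\langle\phi\rangle\psi$ (treated as primitive by tableau rules). $\top$ abbreviates $\lnot\bot$. Segerberg model: $M=\langle U,P,R,V\rangle$ with $U\neq\emptyset$, $P\subseteq\wp(U)$, $R:P\to\wp(U\times U)$, $V:\mathrm{Var}\to P$, such that $\emptyset,U\in P$; $P$ is closed under complement, binary intersection and union; and for $S,T\in P$, $\{x\in U\mid R_S(x)\subseteq T\}\in P$, where $R_S=R(S)$ and $R_S(x)=\{y\mid (x,y)\in R_S\}$. Truth: $M,x\not\models\bot$; $M,x\models p$ iff $x\in V(p)$; Boolean connectives as usual; $M,x\models[\phi]\psi$ iff $M,y\models\psi$ for all $y\in R_\phi(x)$; $M,x\models\langle\phi\rangle\psi$ iff $M,y\models\psi$ for some $y\in R_\phi(x)$; here $\|\phi\|=\{x\mid M,x\models\phi\}$ and $R_\phi=R_{\|\phi\|}$. A $\mathbf{VC}$-model is a Segerberg model such that for all $S,T\in P$ and $x\in U$: (1) $R_S(x)\subseteq S$; (2) $R_S(x)\cap T\neq\emptyset\Rightarrow R_T(x)\neq\emptyset$; (3) $R_U(x)\subseteq\{x\}$; (4) $x\in R_U(x)$; (5) $R_S(x)\cap T\subseteq R_{S\cap T}(x)$; (6) $R_S(x)\cap T\neq\emptyset\Rightarrow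 R_{S\cap T}(x)\subseteq R_S(x)\cap T$. $\Gamma\models_{\mathbf{VC}}\phi$ iff for every $\mathbf{VC}$-model $M$ and world $x$ with $M,x\models\psi$ for all $\psi\in\Gamma$, $M,x\models\phi$. Tableaux: indices are positive integers. Prefixed formulas are $i:\phi$ and $i\,r_\phi\,j$. For a set $\Gamma$ of formulas and a formula $\phi$, a tableau for $(\Gamma,\phi)$ is a finite downward-branching tree labelled by prefixed formulas, each either an assumption ($1:\psi$ with $\psi\in\Gamma$, or $1:\lnot\phi$) or obtained by applying a branch extension rule to prefixed formulas on its branch; non-branching rules append their conclusions, branching rules split the branch into one child per alternative, each alternative appending its listed conclusions. A branch is closed if it contains $i:\chi$ and $i:\lnot\chi$, or $i:\bot$; a tableau is closed if all branches are closed. $\Gamma\vdash_{\mathbf{VC}}\phi$ means there is a closed $\mathbf{VC}$-tableau for $(\Gamma,\phi)$. Basic rules: from $i:\phi\land\psi$ add $i:\phi,i:\psi$; from $i:\lnot(\phi\land\psi)$ branch $i:\lnot\phi\mid i:\lnot\psi$; from $i:\phi\lor\psi$ branch $i:\phi\mid i:\psi$; from $i:\lnot(\phi\lor\psi)$ add $i:\lnot\phi,i:\lnot\psi$; from $i:\phi\supset\psi$ branch $i:\lnot\phi\mid i:\psi$; from $i:\lnot(\phi\supset\psi)$ add $i:\phi,i:\lnot\psi$; from $i:\lnot\lnot\phi$ add $i:\phi$; ($\Box$) from $i:[\phi]\psi$ and $i\,r_\phi\,j$ add $j:\psi$; ($\lnot\Box$) from $i:\lnot[\phi]\psi$ add $i\,r_\phi\,j$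 and $j:\lnot\psi$, $j$ new; ($\Diamond$) from $i:\langle\phi\rangle\psi$ add $i\,r_\phi\,j$ and $j:\psi$, $j$ new; ($\lnot\Diamond$) from $i:\lnot\langle\phi\rangle\psi$ and $i\,r_\phi\,j$ add $j:\lnot\psi$. (cut) for any index $i$ already on the branch and any $\phi$, branch $i:\phi\mid i:\lnot\phi$. (ea) from $i\,r_\phi\,j$ and any $\psi$, branch ($k:\lnot\phi$, $k:\psi$) $\mid$ ($k:\phi$, $k:\lnot\psi$) $\mid$ $i\,r_\psi\,j$, $k$ new. (R1) from $i\,r_\phi\,j$ add $j:\phi$. (R2) from $j:\psi$ and $i\,r_\phi\,j$ add $i\,r_\psi\,k$, $k$ new. (R3) from $i:\phi$, $j:\lnot\phi$, $i\,r_\top\,j$ add $j:\phi$. (R4) for any index $i$ on the branch add $i\,r_\top\,i$. (R5) from $j:\psi$ and $i\,r_\phi\,j$ add $i\,r_{\phi\land\psi}\,j$. (R6) from $j:\psi$, $i\,r_\phi\,j$, $i\,r_{\phi\land\psi}\,k$ add $k:\psi$ and $i\,r_\phi\,k$. $\mathbf{VC}$-tableaux use all of these rules. *)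

From Stdlib Require Import List.
Import ListNotations.

Inductive form : Type :=
| Var : nat -> form
| Bot : form
| Neg : form -> form
| Imp : form -> form -> form
| And : form -> form -> form
| Or  : form -> form -> form
| Box : form -> form -> form
| Dia : form -> form -> form.

Definition Top : form := Neg Bot.

Record SegModel : Type := {
  U : Type;
  P : (U -> Prop) -> Prop;
  R : (U -> Prop) -> U -> U -> Prop;   (* R S x y  <->  (x,y) in R_S *)
  V : nat -> U -> Prop;
  U_nonempty : inhabited U;
  V_in_P : forall p, P (V p);
  P_empty : P (fun _ => False);
  P_full : P (fun _ => True);
  P_compl : forall S, P S -> P (fun x => ~ S x);
  P_inter : forall S T, P S -> P T -> P (fun x => S x /\ T x);
  P_union : forall S T, P S -> P T -> P (fun x => S x \/ T x);
  P_box : forall S T, P S -> P T -> P (fun x => forall y, R S x y -> T y)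
}.

Fixpoint sat (M : SegModel) (f : form) (x : U M) {struct f} : Prop :=
  match f with
  | Var p => V M p x
  | Bot => False
  | Neg a => ~ sat M a x
  | Imp a b => sat M a x -> sat M b x
  | And a b => sat M a x /\ sat M b x
  | Or a b => sat M a x \/ sat M b x
  | Box a b => forall y, R M (fun z => sat M a z) x y -> sat M b y
  | Dia a b => exists y, R M (fun z => sat M a z) x y /\ sat M b y
  end.

Definition isVC (M : SegModel) : Prop :=
  forall (S T : U M -> Prop) (x : U M), P M S -> P M T ->
    (forall y, R M S x y -> S y)
 /\ ((exists y, R M S x y /\ T y) -> exists y, R M T x y)
 /\ (forall y, R M (fun _ => True) x y -> y = x)
 /\ R M (fun _ => True) x x
 /\ (forall y, R M S x y /\ T y -> R M (fun z => S z /\ T z) x y)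
 /\ ((exists y, R M S x y /\ T y) ->
       forall y, R M (fun z => S z /\ T z) x y -> R M S x y /\ T y).

Definition VC_consequence (Gamma : form -> Prop) (phi : form) : Prop :=
  forall (M : SegModel) (x : U M), isVC M ->
    (forall psi, Gamma psi -> sat M psi x) -> sat M phi x.

(* prefixed formulas: i:phi  and  i r_phi j ; indices are positive integers *)
Inductive pform : Type :=
| PF : nat -> form -> pform
| PR : nat -> form -> nat -> pform.

Definition branch := list pform.

Definition idx_on (B : branch) (i : nat) : Prop :=
  exists pf, In pf B /\
    match pf with PF k _ => k = i | PR k _ l => k = i \/ l = i end.

Definition fresh (B : branch) (j : nat) : Prop := j <> 0 /\ ~ idx_on B j.

Definition closed_branch (B : branch) : Prop :=
  (exists i chi, In (PF i chi) B /\ In (PF i (Neg chi)) B) \/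
  (exists i, In (PF i Bot) B).

(* rule B alts : a VC branch extension rule is applicable to premises on B,
   yielding the list of alternatives (one per child), each a list of
   conclusions to append. *)
Inductive rule (B : branch) : list (list pform) -> Prop :=
| r_and i a b : In (PF i (And a b)) B -> rule B [[PF i a; PF i b]]
| r_nand i a b : In (PF i (Neg (And a b))) B ->
    rule B [[PF i (Neg a)]; [PF i (Neg b)]]
| r_or i a b : In (PF i (Or a b)) B -> rule B [[PF i a]; [PF i b]]
| r_nor i a b : In (PF i (Neg (Or a b))) B ->
    rule B [[PF i (Neg a); PF i (Neg b)]]
| r_imp i a b : In (PF i (Imp a b)) B -> rule B [[PF i (Neg a)]; [PF i b]]
| r_nimp i a b : In (PF i (Neg (Imp a b))) B ->
    rule B [[PF i a; PF i (Neg b)]]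
| r_nn i a : In (PF i (Neg (Neg a))) B -> rule B [[PF i a]]
| r_box i j a b : In (PF i (Box a b)) B -> In (PR i a j) B ->
    rule B [[PF j b]]
| r_nbox i j a b : In (PF i (Neg (Box a b))) B -> fresh B j ->
    rule B [[PR i a j; PF j (Neg b)]]
| r_dia i j a b : In (PF i (Dia a b)) B -> fresh B j ->
    rule B [[PR i a j; PF j b]]
| r_ndia i j a b : In (PF i (Neg (Dia a b))) B -> In (PR i a j) B ->
    rule B [[PF j (Neg b)]]
| r_cut i a : idx_on B i -> rule B [[PF i a]; [PF i (Neg a)]]
| r_ea i j k a b : In (PR i a j) B -> fresh B k ->
    rule B [[PF k (Neg a); PF k b]; [PF k a; PF k (Neg b)]; [PR i b j]]
| r_R1 i j a : In (PR i a j) B -> rule B [[PF j a]]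
| r_R2 i j k a b : In (PF j b) B -> In (PR i a j) B -> fresh B k ->
    rule B [[PR i b k]]
| r_R3 i j a : In (PF i a) B -> In (PF j (Neg a)) B -> In (PR i Top j) B ->
    rule B [[PF j a]]
| r_R4 i : idx_on B i -> rule B [[PR i Top i]]
| r_R5 i j a b : In (PF j b) B -> In (PR i a j) B ->
    rule B [[PR i (And a b) j]]
| r_R6 i j k a b : In (PF j b) B -> In (PR i a j) B ->
    In (PR i (And a b) k) B -> rule B [[PF k b; PR i a k]].

(* closable Gamma phi B : the branch B (built so far, as a list of nodes)
   can be extended to a finite tableau for (Gamma, phi) all of whose
   branches are closed. *)
Inductive closable (Gamma : form -> Prop) (phi : form) : branch -> Prop :=
| cl_closed B : closed_branch B -> closable Gamma phi B
| cl_assum B psi : Gamma psi -> closable Gamma phi (PF 1 psi :: B) ->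
    closable Gamma phi B
| cl_negconcl B : closable Gamma phi (PF 1 (Neg phi) :: B) ->
    closable Gamma phi B
| cl_rule B alts : rule B alts ->
    (forall a, In a alts -> closable Gamma phi (rev a ++ B)) ->
    closable Gamma phi B.

Definition VC_derivable (Gamma : form -> Prop) (phi : form) : Prop :=
  closable Gamma phi [].

(* Completeness via the systematic tableau.  If the branch [1:~phi] has no closed extension, apply
   every rule instance in turn (each one infinitely often) while keeping every finite stage
   non-closable; the union H of the stages is clash-free and closed under all rules.  The canonical
   model takes as worlds the formula sets {a | i:a in H} of the indices i, as propositions the sets
   definable by a formula, and lets w R_S v when i r_c j is in H for indices i of w and j of v and a
   formula c defining S; rule (ea) makes the label c irrelevant.  The truth lemma then turns the
   world of index 1 into a countermodel, and rules (R1)-(R6) yield the VC conditions (1)-(6). *)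

From Stdlib Require Import List Lia Cantor Classical ClassicalEpsilon.
From Stdlib Require Import FunctionalExtensionality PropExtensionality ProofIrrelevance.
Import ListNotations.

Lemma to_nat_inj p q : Cantor.to_nat p = Cantor.to_nat q -> p = q.
Proof. intro E. rewrite <- (Cantor.cancel_of_to p), <- (Cantor.cancel_of_to q), E. reflexivity. Qed.

Fixpoint form_code (a : form) : nat :=
  match a with
  | Var p => Cantor.to_nat (0, p)
  | Bot => Cantor.to_nat (1, 0)
  | Neg a => Cantor.to_nat (2, form_code a)
  | Imp a b => Cantor.to_nat (3, Cantor.to_nat (form_code a, form_code b))
  | And a b => Cantor.to_nat (4, Cantor.to_nat (form_code a, form_code b))
  | Or a b => Cantor.to_nat (5, Cantor.to_nat (form_code a, form_code b))
  | Box a b => Cantor.to_nat (6, Cantor.to_nat (form_code a, form_code b))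
  | Dia a b => Cantor.to_nat (7, Cantor.to_nat (form_code a, form_code b))
  end.

Lemma form_code_inj a b : form_code a = form_code b -> a = b.
Proof.
  revert b; induction a; intros [] E; cbn [form_code] in E;
    repeat match goal with
           | E : Cantor.to_nat _ = Cantor.to_nat _ |- _ =>
               apply to_nat_inj, pair_equal_spec in E; destruct E
           end;
    try discriminate; f_equal; auto.
Qed.

Definition form_of (n : nat) : form := epsilon (inhabits Bot) (fun a => form_code a = n).

Lemma form_of_code a : form_of (form_code a) = a.
Proof.
  apply form_code_inj, (epsilon_spec (inhabits Bot) (fun b => form_code b = form_code a)).
  exists a. reflexivity.
Qed.

(* A rule instance up to the choice of its new index; adding an assumption [1:a] counts as a rule. *)
Inductive task : Type :=
| t_assum (a : form)
| t_and (i : nat) (a b : form)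
| t_nand (i : nat) (a b : form)
| t_or (i : nat) (a b : form)
| t_nor (i : nat) (a b : form)
| t_imp (i : nat) (a b : form)
| t_nimp (i : nat) (a b : form)
| t_box (i j : nat) (a b : form)
| t_nbox (i : nat) (a b : form)
| t_dia (i : nat) (a b : form)
| t_ndia (i j : nat) (a b : form)
| t_cut (i : nat) (a : form)
| t_ea (i j : nat) (a b : form)
| t_R1 (i j : nat) (a : form)
| t_R2 (i j : nat) (a b : form)
| t_R3 (i j : nat) (a : form)
| t_R4 (i : nat)
| t_R5 (i j : nat) (a b : form)
| t_R6 (i j l : nat) (a b : form).

Definition task_parts (t : task) : nat * nat * nat * nat * form * form :=
  match t with
  | t_assum a => (0, 0, 0, 0, a, Bot)
  | t_and i a b => (1, i, 0, 0, a, b)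
  | t_nand i a b => (2, i, 0, 0, a, b)
  | t_or i a b => (3, i, 0, 0, a, b)
  | t_nor i a b => (4, i, 0, 0, a, b)
  | t_imp i a b => (5, i, 0, 0, a, b)
  | t_nimp i a b => (6, i, 0, 0, a, b)
  | t_box i j a b => (7, i, j, 0, a, b)
  | t_nbox i a b => (8, i, 0, 0, a, b)
  | t_dia i a b => (9, i, 0, 0, a, b)
  | t_ndia i j a b => (10, i, j, 0, a, b)
  | t_cut i a => (11, i, 0, 0, a, Bot)
  | t_ea i j a b => (12, i, j, 0, a, b)
  | t_R1 i j a => (13, i, j, 0, a, Bot)
  | t_R2 i j a b => (14, i, j, 0, a, b)
  | t_R3 i j a => (15, i, j, 0, a, Bot)
  | t_R4 i => (16, i, 0, 0, Bot, Bot)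
  | t_R5 i j a b => (17, i, j, 0, a, b)
  | t_R6 i j l a b => (18, i, j, l, a, b)
  end.

Definition task_of_parts (p : nat * nat * nat * nat * form * form) : task :=
  let '(kind, i, j, l, a, b) := p in
  match kind with
  | 0 => t_assum a
  | 1 => t_and i a b
  | 2 => t_nand i a b
  | 3 => t_or i a b
  | 4 => t_nor i a b
  | 5 => t_imp i a b
  | 6 => t_nimp i a b
  | 7 => t_box i j a b
  | 8 => t_nbox i a b
  | 9 => t_dia i a b
  | 10 => t_ndia i j a b
  | 11 => t_cut i a
  | 12 => t_ea i j a b
  | 13 => t_R1 i j a
  | 14 => t_R2 i j a b
  | 15 => t_R3 i j a
  | 16 => t_R4 i
  | 17 => t_R5 i j a b
  | _ => t_R6 i j l a b
  end.

Lemma task_of_parts_parts t : task_of_parts (task_parts t) = t.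
Proof. destruct t; reflexivity. Qed.

Definition task_code (t : task) : nat :=
  let '(kind, i, j, l, a, b) := task_parts t in
  Cantor.to_nat (kind, Cantor.to_nat (i, Cantor.to_nat (j, Cantor.to_nat (l,
    Cantor.to_nat (form_code a, form_code b))))).

Definition task_of (n : nat) : task :=
  let (kind, n) := Cantor.of_nat n in let (i, n) := Cantor.of_nat n in
  let (j, n) := Cantor.of_nat n in let (l, n) := Cantor.of_nat n in
  let (na, nb) := Cantor.of_nat n in
  task_of_parts (kind, i, j, l, form_of na, form_of nb).

Lemma task_of_code t : task_of (task_code t) = t.
Proof.
  rewrite <- (task_of_parts_parts t) at 2. unfold task_code, task_of.
  destruct (task_parts t) as [[[[[kind i] j] l] a] b].
  rewrite !Cantor.cancel_of_to, !form_of_code. reflexivity.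
Qed.

Definition task_at (n : nat) : task := task_of (fst (Cantor.of_nat n)).

Lemma task_at_recurs t m : exists n, m <= n /\ task_at n = t.
Proof.
  exists (Cantor.to_nat (task_code t, m)). split.
  - pose proof (Cantor.to_nat_non_decreasing (task_code t) m). lia.
  - unfold task_at. rewrite Cantor.cancel_of_to. apply task_of_code.
Qed.

Definition mentions (x : pform) (i : nat) : Prop :=
  match x with PF k _ => k = i | PR k _ l => k = i \/ l = i end.

Definition indexed (X : pform -> Prop) (i : nat) : Prop := exists x, X x /\ mentions x i.

Inductive premise : Type :=
| Has (x : pform)
| HasIndex (i : nat)
| Assumed (a : form).

Definition premises (t : task) : list premise :=
  match t with
  | t_assum a => [Assumed a]
  | t_and i a b => [Has (PF i (And a b))]
  | t_nand i a b => [Has (PF i (Neg (And a b)))]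
  | t_or i a b => [Has (PF i (Or a b))]
  | t_nor i a b => [Has (PF i (Neg (Or a b)))]
  | t_imp i a b => [Has (PF i (Imp a b))]
  | t_nimp i a b => [Has (PF i (Neg (Imp a b)))]
  | t_box i j a b => [Has (PF i (Box a b)); Has (PR i a j)]
  | t_nbox i a b => [Has (PF i (Neg (Box a b)))]
  | t_dia i a b => [Has (PF i (Dia a b))]
  | t_ndia i j a b => [Has (PF i (Neg (Dia a b))); Has (PR i a j)]
  | t_cut i a => [HasIndex i]
  | t_ea i j a b => [Has (PR i a j)]
  | t_R1 i j a => [Has (PR i a j)]
  | t_R2 i j a b => [Has (PF j b); Has (PR i a j)]
  | t_R3 i j a => [Has (PF i a); Has (PF j (Neg a)); Has (PR i Top j)]
  | t_R4 i => [HasIndex i]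
  | t_R5 i j a b => [Has (PF j b); Has (PR i a j)]
  | t_R6 i j l a b => [Has (PF j b); Has (PR i a j); Has (PR i (And a b) l)]
  end.

(* [k] is the new index, for the rules that introduce one. *)
Definition alternatives (t : task) (k : nat) : list (list pform) :=
  match t with
  | t_assum a => [[PF 1 a]]
  | t_and i a b => [[PF i a; PF i b]]
  | t_nand i a b => [[PF i (Neg a)]; [PF i (Neg b)]]
  | t_or i a b => [[PF i a]; [PF i b]]
  | t_nor i a b => [[PF i (Neg a); PF i (Neg b)]]
  | t_imp i a b => [[PF i (Neg a)]; [PF i b]]
  | t_nimp i a b => [[PF i a; PF i (Neg b)]]
  | t_box i j a b => [[PF j b]]
  | t_nbox i a b => [[PR i a k; PF k (Neg b)]]
  | t_dia i a b => [[PR i a k; PF k b]]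
  | t_ndia i j a b => [[PF j (Neg b)]]
  | t_cut i a => [[PF i a]; [PF i (Neg a)]]
  | t_ea i j a b => [[PF k (Neg a); PF k b]; [PF k a; PF k (Neg b)]; [PR i b j]]
  | t_R1 i j a => [[PF j a]]
  | t_R2 i j a b => [[PR i b k]]
  | t_R3 i j a => [[PF j a]]
  | t_R4 i => [[PR i Top i]]
  | t_R5 i j a b => [[PR i (And a b) j]]
  | t_R6 i j l a b => [[PF l b; PR i a l]]
  end.

Section Saturation.
Variable Gamma : form -> Prop.

Definition holds (X : pform -> Prop) (p : premise) : Prop :=
  match p with Has x => X x | HasIndex i => indexed X i | Assumed a => Gamma a end.

Lemma holds_mono (X Y : pform -> Prop) p :
  (forall x, X x -> Y x) -> holds X p -> holds Y p.
Proof.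
  intro XY. destruct p as [x|i|a]; simpl; auto.
  intros [x [Hx Hi]]. exists x. auto.
Qed.

Definition saturated (H : pform -> Prop) : Prop :=
  forall t, Forall (holds H) (premises t) ->
    exists k al, In al (alternatives t k) /\ Forall H al.

End Saturation.

Definition clash_free (H : pform -> Prop) : Prop :=
  (forall i a, H (PF i a) -> H (PF i (Neg a)) -> False) /\ (forall i, ~ H (PF i Bot)).

Definition max_index (B : branch) : nat :=
  fold_right (fun x m =>
    match x with PF k _ => Nat.max k m | PR k _ l => Nat.max k (Nat.max l m) end) 0 B.

Lemma mentions_le_max_index B x i : In x B -> mentions x i -> i <= max_index B.
Proof.
  induction B as [|y B IH]; intros Hx Hi; [destruct Hx|]; destruct Hx as [->|Hx]; simpl.
  - destruct x; simpl in Hi; lia.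
  - specialize (IH Hx Hi). destruct y; lia.
Qed.

Lemma fresh_succ_max_index B : fresh B (S (max_index B)).
Proof.
  split; [discriminate|]. intros [x [Hx Hi]].
  pose proof (mentions_le_max_index B x _ Hx Hi). lia.
Qed.

Section OpenBranches.
Variables (Gamma : form -> Prop) (phi : form).

Notation closable := (closable Gamma phi).

Lemma alternatives_expand t B k :
  Forall (holds Gamma (fun x => In x B)) (premises t) -> fresh B k ->
  (forall al, In al (alternatives t k) -> closable (rev al ++ B)) -> closable B.
Proof.
  intros Hp Hk Hcl.
  destruct t; simpl in Hp;
    repeat match goal with Hp : Forall _ (_ :: _) |- _ => inversion_clear Hp end;
    cbn [holds] in *.
  1: eapply cl_assum; [eassumption | exact (Hcl _ (or_introl eq_refl))].
  all: refine (cl_rule _ _ _ _ _ Hcl); solve [econstructor; eassumption].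
Qed.

Lemma open_alternative t B k :
  ~ closable B -> Forall (holds Gamma (fun x => In x B)) (premises t) -> fresh B k ->
  exists al, In al (alternatives t k) /\ ~ closable (rev al ++ B).
Proof.
  intros Hopen Hp Hk. apply NNPP. intro Hall. apply Hopen.
  apply (alternatives_expand t B k Hp Hk). intros al Hal.
  apply NNPP. intro Hcl. apply Hall. exists al. auto.
Qed.

Definition serves (t : task) (B B' : branch) : Prop :=
  Forall (holds Gamma (fun x => In x B)) (premises t) ->
  exists k al, In al (alternatives t k) /\ Forall (fun x => In x B') al.

Lemma open_extension t B :
  ~ closable B -> exists B', ~ closable B' /\ incl B B' /\ serves t B B'.
Proof.
  intro Hopen.
  destruct (classic (Forall (holds Gamma (fun x => In x B)) (premises t))) as [Hp|Hnp].
  - destruct (open_alternative t B _ Hopen Hp (fresh_succ_max_index B)) as [al [Hal Hcl]].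
    exists (rev al ++ B). split; [exact Hcl|]. split; [apply incl_appr, incl_refl|].
    intros _. exists (S (max_index B)), al. split; [exact Hal|].
    apply Forall_forall. intros x Hx. apply in_or_app. left. apply -> in_rev. exact Hx.
  - exists B. split; [exact Hopen|]. split; [apply incl_refl|]. intro Hp. contradiction.
Qed.

Variable B0 : branch.
Hypothesis B0_open : ~ closable B0.

Definition open_branch : Type := {B : branch | ~ closable B}.

Definition extend (t : task) (B : open_branch) : open_branch :=
  let (B', HB') := constructive_indefinite_description _ (open_extension t _ (proj2_sig B)) in
  exist _ B' (proj1 HB').

Fixpoint chain (n : nat) : open_branch :=
  match n with
  | 0 => exist _ B0 B0_open
  | S n => extend (task_at n) (chain n)
  end.

Definition stage (n : nat) : branch := proj1_sig (chain n).

Lemma stage_step n : incl (stage n) (stage (S n)) /\ serves (task_at n) (stage n) (stage (S n)).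
Proof.
  unfold stage. simpl. unfold extend.
  destruct (constructive_indefinite_description _ _) as [B' HB']. exact (proj2 HB').
Qed.

Lemma stage_mono n m : n <= m -> incl (stage n) (stage m).
Proof.
  induction 1; [apply incl_refl|]. eapply incl_tran; [eassumption|]. apply stage_step.
Qed.

Definition limit (x : pform) : Prop := exists n, In x (stage n).

Lemma limit_premises ps :
  Forall (holds Gamma limit) ps -> exists m, Forall (holds Gamma (fun x => In x (stage m))) ps.
Proof.
  assert (holds_at_stage : forall p, holds Gamma limit p ->
                             exists m, holds Gamma (fun x => In x (stage m)) p).
  { intros [x|i|a]; simpl.
    - intros [n Hn]. exists n. exact Hn.
    - intros [x [[n Hn] Hi]]. exists n, x. auto.
    - intro Ha. exists 0. exact Ha. }
  induction 1 as [|p ps Hp _ [m IH]]; [exists 0; constructor|].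
  destruct (holds_at_stage p Hp) as [n Hn]. exists (n + m). constructor.
  - revert Hn. apply holds_mono, stage_mono. lia.
  - revert IH. apply Forall_impl. intro q. apply holds_mono, stage_mono. lia.
Qed.

Lemma limit_saturated : saturated Gamma limit.
Proof.
  intros t Hp. destruct (limit_premises _ Hp) as [m Hm].
  destruct (task_at_recurs t m) as [n [Hmn <-]].
  destruct (proj2 (stage_step n)) as [k [al [Hal Hin]]].
  - revert Hm. apply Forall_impl. intro p. apply holds_mono, stage_mono, Hmn.
  - exists k, al. split; [exact Hal|].
    revert Hin. apply Forall_impl. intros x Hx. exists (S n). exact Hx.
Qed.

Lemma limit_clash_free : clash_free limit.
Proof.
  split.
  - intros i a [n Hn] [m Hm]. apply (proj2_sig (chain (n + m))). apply cl_closed. left.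
    exists i, a. split; [apply (stage_mono n) | apply (stage_mono m)]; auto; lia.
  - intros i [n Hn]. apply (proj2_sig (chain n)). apply cl_closed. right. eauto.
Qed.

End OpenBranches.

Lemma open_branch_saturation Gamma phi B :
  ~ closable Gamma phi B ->
  exists H, saturated Gamma H /\ clash_free H /\ forall x, In x B -> H x.
Proof.
  intro Hopen. exists (limit Gamma phi B Hopen). split; [apply limit_saturated|].
  split; [apply limit_clash_free|]. intros x Hx. exists 0. exact Hx.
Qed.

Section CanonicalModel.
Variables (Gamma : form -> Prop) (H : pform -> Prop).
Hypotheses (H_saturated : saturated Gamma H) (H_clash_free : clash_free H).

Ltac apply_rule t :=
  let al := fresh "al" in let Hal := fresh "Hal" in let Hin := fresh "Hin" in
  destruct (H_saturated t) as [? [al [Hal Hin]]];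
  [ repeat constructor; assumption
  | simpl in Hal; repeat destruct Hal as [<-|Hal]; try contradiction;
    repeat match goal with F : Forall _ (_ :: _) |- _ => inversion_clear F end ].

Lemma saturated_assum a : Gamma a -> H (PF 1 a).
Proof. intro Ha. apply_rule (t_assum a). assumption. Qed.

Lemma saturated_and i a b : H (PF i (And a b)) -> H (PF i a) /\ H (PF i b).
Proof. intro Hab. apply_rule (t_and i a b). auto. Qed.

Lemma saturated_nand i a b : H (PF i (Neg (And a b))) -> H (PF i (Neg a)) \/ H (PF i (Neg b)).
Proof. intro Hab. apply_rule (t_nand i a b); auto. Qed.

Lemma saturated_or i a b : H (PF i (Or a b)) -> H (PF i a) \/ H (PF i b).
Proof. intro Hab. apply_rule (t_or i a b); auto. Qed.

Lemma saturated_nor i a b : H (PF i (Neg (Or a b))) -> H (PF i (Neg a)) /\ H (PF i (Neg b)).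
Proof. intro Hab. apply_rule (t_nor i a b). auto. Qed.

Lemma saturated_imp i a b : H (PF i (Imp a b)) -> H (PF i (Neg a)) \/ H (PF i b).
Proof. intro Hab. apply_rule (t_imp i a b); auto. Qed.

Lemma saturated_nimp i a b : H (PF i (Neg (Imp a b))) -> H (PF i a) /\ H (PF i (Neg b)).
Proof. intro Hab. apply_rule (t_nimp i a b). auto. Qed.

Lemma saturated_box i j a b : H (PF i (Box a b)) -> H (PR i a j) -> H (PF j b).
Proof. intros Hab Hr. apply_rule (t_box i j a b). assumption. Qed.

Lemma saturated_nbox i a b : H (PF i (Neg (Box a b))) -> exists j, H (PR i a j) /\ H (PF j (Neg b)).
Proof. intro Hab. apply_rule (t_nbox i a b). eauto. Qed.

Lemma saturated_dia i a b : H (PF i (Dia a b)) -> exists j, H (PR i a j) /\ H (PF j b).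
Proof. intro Hab. apply_rule (t_dia i a b). eauto. Qed.

Lemma saturated_ndia i j a b : H (PF i (Neg (Dia a b))) -> H (PR i a j) -> H (PF j (Neg b)).
Proof. intros Hab Hr. apply_rule (t_ndia i j a b). assumption. Qed.

Lemma saturated_cut i a : indexed H i -> H (PF i a) \/ H (PF i (Neg a)).
Proof. intro Hi. apply_rule (t_cut i a); auto. Qed.

Lemma saturated_ea i j a b : H (PR i a j) ->
  (exists k, (H (PF k (Neg a)) /\ H (PF k b)) \/ (H (PF k a) /\ H (PF k (Neg b)))) \/ H (PR i b j).
Proof. intro Hr. apply_rule (t_ea i j a b); eauto. Qed.

Lemma saturated_R1 i j a : H (PR i a j) -> H (PF j a).
Proof. intro Hr. apply_rule (t_R1 i j a). assumption. Qed.

Lemma saturated_R2 i j a b : H (PF j b) -> H (PR i a j) -> exists k, H (PR i b k).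
Proof. intros Hb Hr. apply_rule (t_R2 i j a b). eauto. Qed.

Lemma saturated_R3 i j a : H (PF i a) -> H (PF j (Neg a)) -> H (PR i Top j) -> H (PF j a).
Proof. intros Ha Hna Hr. apply_rule (t_R3 i j a). assumption. Qed.

Lemma saturated_R4 i : indexed H i -> H (PR i Top i).
Proof. intro Hi. apply_rule (t_R4 i). assumption. Qed.

Lemma saturated_R5 i j a b : H (PF j b) -> H (PR i a j) -> H (PR i (And a b) j).
Proof. intros Hb Hr. apply_rule (t_R5 i j a b). assumption. Qed.

Lemma saturated_R6 i j k a b : H (PF j b) -> H (PR i a j) -> H (PR i (And a b) k) ->
  H (PF k b) /\ H (PR i a k).
Proof. intros Hb Hr Hk. apply_rule (t_R6 i j k a b). auto. Qed.

Lemma clash i a : H (PF i a) -> H (PF i (Neg a)) -> False.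
Proof. apply H_clash_free. Qed.

Lemma indexed_PF i a : H (PF i a) -> indexed H i.
Proof. intro Ha. exists (PF i a). split; [exact Ha | reflexivity]. Qed.

Lemma indexed_PR_source i a j : H (PR i a j) -> indexed H i.
Proof. intro Hr. exists (PR i a j). split; [exact Hr | left; reflexivity]. Qed.

Lemma indexed_PR_target i a j : H (PR i a j) -> indexed H j.
Proof. intro Hr. exists (PR i a j). split; [exact Hr | right; reflexivity]. Qed.

(* Indices with the same label become one world, as condition (3) requires. *)
Definition label (i : nat) : form -> Prop := fun a => H (PF i a).

Definition world : Type := {X : form -> Prop | exists i, indexed H i /\ X = label i}.

Definition world_at (i : nat) (Hi : indexed H i) : world :=
  exist _ (label i) (ex_intro _ i (conj Hi eq_refl)).

Definition contains (w : world) (a : form) : Prop := proj1_sig w a.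

Definition at_index (w : world) (i : nat) : Prop :=
  indexed H i /\ forall a, contains w a <-> H (PF i a).

Lemma world_at_index w : exists i, at_index w i.
Proof. destruct w as [X [i [Hi ->]]]. exists i. split; [exact Hi | reflexivity]. Qed.

Lemma at_index_world_at i (Hi : indexed H i) : at_index (world_at i Hi) i.
Proof. split; [exact Hi | reflexivity]. Qed.

Lemma contains_Neg w a : contains w (Neg a) <-> ~ contains w a.
Proof.
  destruct (world_at_index w) as [i [Hi Hw]]. rewrite !Hw. split.
  - intros Hna Ha. exact (clash i a Ha Hna).
  - intro Hna. destruct (saturated_cut i a Hi); tauto.
Qed.

Lemma contains_Bot w : ~ contains w Bot.
Proof. destruct (world_at_index w) as [i [_ Hw]]. rewrite Hw. apply H_clash_free. Qed.

Lemma contains_Top w : contains w Top.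
Proof. apply contains_Neg, contains_Bot. Qed.

Lemma contains_And w a b : contains w (And a b) <-> contains w a /\ contains w b.
Proof.
  destruct (world_at_index w) as [i [Hi Hw]]. rewrite !Hw. split; [apply saturated_and|].
  intros [Ha Hb]. destruct (saturated_cut i (And a b) Hi) as [|Hn]; [assumption|].
  destruct (saturated_nand _ _ _ Hn) as [Hna|Hnb].
  - destruct (clash _ _ Ha Hna).
  - destruct (clash _ _ Hb Hnb).
Qed.

Lemma contains_Or w a b : contains w (Or a b) <-> contains w a \/ contains w b.
Proof.
  destruct (world_at_index w) as [i [Hi Hw]]. rewrite !Hw. split; [apply saturated_or|].
  intro Hab. destruct (saturated_cut i (Or a b) Hi) as [|Hn]; [assumption|].
  destruct (saturated_nor _ _ _ Hn) as [Hna Hnb].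
  destruct Hab as [Ha|Hb]; [destruct (clash _ _ Ha Hna) | destruct (clash _ _ Hb Hnb)].
Qed.

Lemma contains_Imp w a b : contains w (Imp a b) <-> (contains w a -> contains w b).
Proof.
  destruct (world_at_index w) as [i [Hi Hw]]. rewrite !Hw. split.
  - intros Hab Ha. destruct (saturated_imp _ _ _ Hab) as [Hna|Hb]; [|exact Hb].
    destruct (clash _ _ Ha Hna).
  - intro Hab. destruct (saturated_cut i (Imp a b) Hi) as [|Hn]; [assumption|].
    destruct (saturated_nimp _ _ _ Hn) as [Ha Hnb]. destruct (clash _ _ (Hab Ha) Hnb).
Qed.

Definition defines (S : world -> Prop) (c : form) : Prop := forall w, S w <-> contains w c.

Lemma saturated_relabel S c a i j : defines S c -> defines S a -> H (PR i c j) -> H (PR i a j).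
Proof.
  intros Hc Ha Hr.
  assert (same : forall k (Hk : indexed H k), H (PF k c) <-> H (PF k a)).
  { intros k Hk. pose proof (Hc (world_at k Hk)). pose proof (Ha (world_at k Hk)).
    unfold contains in *; simpl in *. tauto. }
  destruct (saturated_ea i j c a Hr) as [[k [[Hk1 Hk2]|[Hk1 Hk2]]]|]; [exfalso..|assumption].
  - apply (clash k c); [apply same; [eapply indexed_PF|]|]; eauto.
  - apply (clash k a); [apply same; [eapply indexed_PF|]|]; eauto.
Qed.

Definition rel (S : world -> Prop) (w v : world) : Prop :=
  exists i j c, at_index w i /\ at_index v j /\ defines S c /\ H (PR i c j).

Lemma box_iff S T a b w : defines S a -> defines T b ->
  (forall v, rel S w v -> T v) <-> contains w (Box a b).
Proof.
  intros HS HT. destruct (world_at_index w) as [i [Hi Hw]]. rewrite Hw. split.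
  - intro Hbox. destruct (saturated_cut i (Box a b) Hi) as [|Hn]; [assumption|exfalso].
    destruct (saturated_nbox _ _ _ Hn) as [j [Hr Hj]].
    assert (Tv : T (world_at j (indexed_PR_target _ _ _ Hr))).
    { apply Hbox. exists i, j, a.
      split; [split; assumption|]. split; [apply at_index_world_at|]. split; assumption. }
    apply HT in Tv. exact (clash j b Tv Hj).
  - intros Hbox v (i' & j & c & [_ Hw'] & [_ Hv] & Hc & Hr). apply HT, Hv.
    apply (saturated_box i' j a b); [apply Hw', Hw, Hbox|].
    exact (saturated_relabel S c a i' j Hc HS Hr).
Qed.

Lemma dia_iff S T a b w : defines S a -> defines T b ->
  (exists v, rel S w v /\ T v) <-> contains w (Dia a b).
Proof.
  intros HS HT. destruct (world_at_index w) as [i [Hi Hw]]. rewrite Hw. split.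
  - intros (v & (i' & j & c & [Hi' Hw'] & [_ Hv] & Hc & Hr) & Tv). apply Hw, Hw'.
    destruct (saturated_cut i' (Dia a b) Hi') as [|Hn]; [assumption|exfalso].
    apply (clash j b); [apply Hv, HT, Tv|].
    exact (saturated_ndia i' j a b Hn (saturated_relabel S c a i' j Hc HS Hr)).
  - intro Hdia. destruct (saturated_dia _ _ _ Hdia) as [j [Hr Hj]].
    exists (world_at j (indexed_PR_target _ _ _ Hr)). split.
    + exists i, j, a.
      split; [split; assumption|]. split; [apply at_index_world_at|]. split; assumption.
    + apply HT. exact Hj.
Qed.

Definition definable (S : world -> Prop) : Prop := exists c, defines S c.

Lemma definable_label p : definable (fun w => contains w (Var p)).
Proof. exists (Var p). intro w. reflexivity. Qed.

Lemma definable_empty : definable (fun _ => False).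
Proof. exists Bot. intro w. pose proof (contains_Bot w). tauto. Qed.

Lemma definable_compl S : definable S -> definable (fun w => ~ S w).
Proof. intros [a Ha]. exists (Neg a). intro w. rewrite contains_Neg, (Ha w). reflexivity. Qed.

Lemma defines_full : defines (fun _ => True) Top.
Proof. intro w. pose proof (contains_Top w). tauto. Qed.

Lemma defines_inter S T a b :
  defines S a -> defines T b -> defines (fun w => S w /\ T w) (And a b).
Proof. intros Ha Hb w. rewrite contains_And, (Ha w), (Hb w). reflexivity. Qed.

Lemma definable_inter S T : definable S -> definable T -> definable (fun w => S w /\ T w).
Proof. intros [a Ha] [b Hb]. exists (And a b). apply defines_inter; assumption. Qed.

Lemma definable_union S T : definable S -> definable T -> definable (fun w => S w \/ T w).
Proof.
  intros [a Ha] [b Hb]. exists (Or a b). intro w. rewrite contains_Or, (Ha w), (Hb w). reflexivity.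
Qed.

Lemma definable_full : definable (fun _ => True).
Proof. exists Top. exact defines_full. Qed.

Lemma definable_box S T :
  definable S -> definable T -> definable (fun w => forall v, rel S w v -> T v).
Proof. intros [a Ha] [b Hb]. exists (Box a b). intro w. apply box_iff; assumption. Qed.

Lemma world_ext w v : (forall a, contains w a <-> contains v a) -> w = v.
Proof.
  destruct w as [X HX], v as [Y HY]. unfold contains. simpl. intro XY.
  assert (X = Y) as <-.
  { apply functional_extensionality. intro a. apply propositional_extensionality, XY. }
  f_equal. apply proof_irrelevance.
Qed.

Lemma saturated_top_same_label i j : H (PR i Top j) -> forall a, H (PF i a) <-> H (PF j a).
Proof.
  intros Hr a. pose proof (indexed_PR_source _ _ _ Hr) as Hi.
  pose proof (indexed_PR_target _ _ _ Hr) as Hj. split.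
  - intro Ha. destruct (saturated_cut j a Hj) as [|Hna]; [assumption|].
    exact (saturated_R3 i j a Ha Hna Hr).
  - intro Ha. destruct (saturated_cut i a Hi) as [|Hna]; [assumption|]. exfalso.
    destruct (saturated_cut j (Neg a) Hj) as [Hna'|Hnna]; apply (clash j a Ha); [assumption|].
    exact (saturated_R3 i j (Neg a) Hna Hnna Hr).
Qed.

Lemma rel_sub S w v : rel S w v -> S v.
Proof. intros (i & j & c & _ & [_ Hv] & Hc & Hr). apply Hc, Hv. exact (saturated_R1 i j c Hr). Qed.

Lemma rel_nonempty S T b w v : defines T b -> rel S w v -> T v -> exists u, rel T w u.
Proof.
  intros HT (i & j & c & Hw & [_ Hv] & Hc & Hr) Tv.
  destruct (saturated_R2 i j c b (proj1 (Hv b) (proj1 (HT v) Tv)) Hr) as [k Hk].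
  exists (world_at k (indexed_PR_target _ _ _ Hk)), i, k, b.
  split; [assumption|]. split; [apply at_index_world_at|]. split; assumption.
Qed.

Lemma rel_full_functional w v : rel (fun _ => True) w v -> v = w.
Proof.
  intros (i & j & c & [_ Hw] & [_ Hv] & Hc & Hr).
  pose proof (saturated_relabel _ c Top i j Hc defines_full Hr) as Htop.
  apply world_ext. intro a. rewrite Hv, Hw. symmetry. apply saturated_top_same_label, Htop.
Qed.

Lemma rel_full_refl w : rel (fun _ => True) w w.
Proof.
  destruct (world_at_index w) as [i [Hi Hw]].
  exists i, i, Top. split; [split; assumption|]. split; [split; assumption|].
  split; [exact defines_full | exact (saturated_R4 i Hi)].
Qed.

Lemma rel_restrict S T b w v : defines T b -> rel S w v -> T v -> rel (fun z => S z /\ T z) w v.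
Proof.
  intros HT (i & j & c & Hw & [Hj Hv] & Hc & Hr) Tv. exists i, j, (And c b).
  split; [assumption|]. split; [split; assumption|]. split; [apply defines_inter; assumption|].
  exact (saturated_R5 i j c b (proj1 (Hv b) (proj1 (HT v) Tv)) Hr).
Qed.

Lemma rel_restrict_inv S T a b w v : defines S a -> defines T b ->
  (exists u, rel S w u /\ T u) -> rel (fun z => S z /\ T z) w v -> rel S w v /\ T v.
Proof.
  intros HS HT Hu (i & j & d & [Hi Hw] & [Hj Hv] & Hd & Hr).
  apply (dia_iff S T a b w HS HT), Hw in Hu.
  destruct (saturated_dia _ _ _ Hu) as [k [Hk Hkb]].
  pose proof (saturated_relabel _ d (And a b) i j Hd (defines_inter S T a b HS HT) Hr) as Hab.
  destruct (saturated_R6 i k j a b Hkb Hk Hab) as [Hjb Hja]. split.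
  - exists i, j, a. split; [split; assumption|]. split; [split; assumption|]. split; assumption.
  - apply HT, Hv, Hjb.
Qed.

Variable i0 : nat.
Hypothesis i0_indexed : indexed H i0.

Definition canonical_model : SegModel :=
  {| U := world; P := definable; R := rel; V := fun p w => contains w (Var p);
     U_nonempty := inhabits (world_at i0 i0_indexed);
     V_in_P := definable_label; P_empty := definable_empty; P_full := definable_full;
     P_compl := definable_compl; P_inter := definable_inter; P_union := definable_union;
     P_box := definable_box |}.

Lemma truth a w : sat canonical_model a w <-> contains w a.
Proof.
  revert w. induction a; intro w; simpl.
  - reflexivity.
  - pose proof (contains_Bot w). tauto.
  - rewrite contains_Neg, IHa. reflexivity.
  - rewrite contains_Imp, IHa1, IHa2. reflexivity.
  - rewrite contains_And, IHa1, IHa2. reflexivity.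
  - rewrite contains_Or, IHa1, IHa2. reflexivity.
  - apply box_iff; assumption.
  - apply dia_iff; assumption.
Qed.

Lemma canonical_model_VC : isVC canonical_model.
Proof.
  intros S T w [a HS] [b HT]. simpl.
  split; [apply rel_sub|]. split; [intros [v [Hv Tv]]; exact (rel_nonempty S T b w v HT Hv Tv)|].
  split; [apply rel_full_functional|]. split; [apply rel_full_refl|].
  split; [intros v [Hv Tv]; exact (rel_restrict S T b w v HT Hv Tv)|].
  intros Hu v. exact (rel_restrict_inv S T a b w v HS HT Hu).
Qed.

End CanonicalModel.

Theorem mainTheorem10 (Gamma : form -> Prop) (phi : form) :
  VC_consequence Gamma phi -> VC_derivable Gamma phi.
Proof.
  intro Hconseq. apply NNPP. intro Hopen.
  assert (Hopen1 : ~ closable Gamma phi [PF 1 (Neg phi)]).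
  { intro Hcl. exact (Hopen (cl_negconcl _ _ _ Hcl)). }
  destruct (open_branch_saturation _ _ _ Hopen1) as (H & Hsat & Hfree & HB).
  assert (Hnphi : H (PF 1 (Neg phi))) by (apply HB; left; reflexivity).
  pose (M := canonical_model Gamma H Hsat Hfree 1 (indexed_PF H 1 _ Hnphi)).
  pose (x := world_at H 1 (indexed_PF H 1 _ Hnphi) : U M).
  apply (clash H Hfree 1 phi); [|exact Hnphi].
  apply (truth Gamma H Hsat Hfree _ _ phi x), Hconseq; [apply canonical_model_VC|].
  intros psi Hpsi. apply truth. exact (saturated_assum Gamma H Hsat psi Hpsi).
Qed.
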